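(* Let $(J,S)$ be a homogeneous $d$-dimensional multi-time Markov renewal chain with semi-Markov kernel $q$, $u=\sum_{n\ge0}q^{(n)}$, and Markov renewal function $U$. Then $U$ satisfies the multi-time Markov renewal equation $U=\mathrm{dg}(\mathbbm{1}_s)+q*U$, and consequently $U=\mathrm{dg}(\mathbbm{1}_s)*u$, i.e. $U(k_{1:d})=\sum_{l\le k_{1:d}}u(l)$.
   Context: $E=\{1,\dots,s\}$; $\mathcal{M}_s(\mathbb{N}^d)$ is the set of functions $\mathbb{N}^d\to\mathbb{R}^{s\times s}$ with convolution $[A*B](k)=\sum_{l+l'=k}A(l)B(l')$, powers $A^{(0)}=\mathbbm{I}_s$ ($I_s$ at $0_d$, zero elsewhere), $A^{(n)}=A*A^{(n-1)}$. $\mathbbm{1}$ is the real sequence identically $1$ on $\mathbb{N}^d$, and $\mathrm{dg}(\mathbbm{1}_s)$ is the matrix sequence equal to $I_s$ at every $k\in\mathbb{N}^d$ (so $[\mathrm{dg}(\mathbbm{1}_s)*A](k)=\sum_{l\le k}A(l)$). $\mathbb{N}^d$ carries the componentwise partial order $\le$, with $k<l$ meaning $k\le l$, $k\ne l$. A homogeneous $d$-dimensional multi-time Markov renewal chain is a process $(J_n,S_n)_{n\in\mathbb{N}}$, $J_n\in E$, $S_n\in\mathbb{N}^d$, $S_0=0_d$, $S_n<S_{n+1}$, with a.s. $\mathbb{P}(J_{n+1}=j,S_{n+1}-S_n=k\mid J_{0:n},S_{0:n})=q_{J_nj}(k)$, $q_{ij}(k)=\mathbb{P}(J_{n+1}=j,S_{n+1}-S_n=k\mid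 J_n=i)$ independent of $n$. $N(k)=\sup\{n:S_n\le k\}$; $\widetilde{N}_j(k)=\sum_{n=0}^{N(k)}\mathbf{1}\{J_n=j\}$; the Markov renewal function is $U_{ij}(k)=\mathbb{E}_i[\widetilde{N}_j(k)]$, where $\mathbb{E}_i$ is expectation given $J_0=i$. *)

From HB Require Import structures.
From mathcomp Require Import all_boot all_order all_algebra.
From mathcomp Require Import all_classical all_reals all_analysis.
Set Implicit Arguments. Unset Strict Implicit. Unset Printing Implicit Defensive.
Import Order.TTheory GRing.Theory Num.Theory.
Local Open Scope ring_scope.

Definition levec (d : nat) (k l : 'I_d -> nat) : bool := [forall i, k i <= l i]%N.
Definition ltvec (d : nat) (k l : 'I_d -> nat) : Prop := levec k l /\ k <> l.
Definition addvec (d : nat) (k l : 'I_d -> nat) : 'I_d -> nat := fun i => (k i + l i)%N.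
Definition zerovec (d : nat) : 'I_d -> nat := fun _ => 0%N.
Definition normvec (d : nat) (k : 'I_d -> nat) : nat := (\sum_(i < d) k i)%N.

Definition mseq (R : realType) (s d : nat) := ('I_d -> nat) -> 'M[R]_s.

(* convolution [A*B](k) = sum_{l + l' = k} A(l) B(l') ; l ranges over l <= k,
   encoded as finite functions with values < |k|+1 *)
Definition mconv (R : realType) (s d : nat) (A B : mseq R s d) : mseq R s d :=
  fun k => \sum_(l : {ffun 'I_d -> 'I_(normvec k).+1}
                 | levec (fun i => nat_of_ord (l i)) k)
             (A (fun i => nat_of_ord (l i)) *m B (fun i => (k i - l i)%N)).

Definition munit (R : realType) (s d : nat) : mseq R s d :=
  fun k => if [forall i, k i == 0%N] then 1%:M else 0.

Fixpoint mpow (R : realType) (s d : nat) (A : mseq R s d) (n : nat) : mseq R s d :=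
  match n with
  | 0 => @munit R s d
  | n'.+1 => @mconv R s d A (mpow A n')
  end.

Definition dg1 (R : realType) (s d : nat) : mseq R s d := fun _ => 1%:M.

Definition mrkernel_u (R : realType) (s d : nat) (q : mseq R s d) : mseq R s d :=
  fun k => \matrix_(i, j) limn (fun N => \sum_(0 <= n < N) mpow q n k i j).

(* N(k) = sup {n : S_n <= k}.  Since S_n < S_{n+1} componentwise-strictly in
   the partial order, S_n <= k forces n <= |k|, so the sup is a max over n <= |k|. *)
Definition Ncount (d : nat) (T : Type) (S : nat -> T -> 'I_d -> nat)
  (k : 'I_d -> nat) (w : T) : nat :=
  (\max_(n < (normvec k).+1 | levec (S n w) k) n)%N.

Definition Ntilde (s d : nat) (T : Type) (J : nat -> T -> 'I_s)
  (S : nat -> T -> 'I_d -> nat) (j : 'I_s) (k : 'I_d -> nat) (w : T) : nat :=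
  (\sum_(n < (Ncount S k w).+1) (J n w == j))%N.

Definition hist_event (s d : nat) (T : Type) (J : nat -> T -> 'I_s)
  (S : nat -> T -> 'I_d -> nat) (jh : nat -> 'I_s) (sh : nat -> 'I_d -> nat)
  (n : nat) : set T :=
  [set w | forall m, (m <= n)%N -> J m w = jh m /\ S m w = sh m].

Definition MRfunE (R : realType) (dT : measure_display) (T : measurableType dT)
  (s d : nat) (P : 'I_s -> probability T R) (J : nat -> T -> 'I_s)
  (S : nat -> T -> 'I_d -> nat) (i j : 'I_s) (k : 'I_d -> nat) : \bar R :=
  (\int[P i]_w ((Ntilde J S j k w)%:R)%:E)%E.

Definition MRfun (R : realType) (dT : measure_display) (T : measurableType dT)
  (s d : nat) (P : 'I_s -> probability T R) (J : nat -> T -> 'I_s)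
  (S : nat -> T -> 'I_d -> nat) : mseq R s d :=
  fun k => \matrix_(i, j) fine (MRfunE P J S i j k).

(* Since S is strictly increasing, S_n <= k forces n <= |k|, so
   U_ij(k) = sum_(n <= |k|) P_i(J_n = j, S_n <= k).  Summing the Markov property
   over all histories of the chain gives P_i(J_n = j, S_n = l) = q^(n)_ij(l); as
   q(0) = 0, q^(n)(l) vanishes for n > |l|, so every u(l) is a finite sum and
   U(k) = sum_(l <= k) u(l) = [dg(1_s) * u](k).  Finally u = 1 + q * u for the
   convolution unit 1, and dg(1_s) commutes with q under convolution, so
   associativity turns U = dg(1_s) * u into the renewal equation
   U = dg(1_s) + q * U. *)

From HB Require Import structures.
From mathcomp Require Import all_boot all_order all_algebra.
From mathcomp Require Import all_classical all_reals all_analysis.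
From mathcomp Require Import zify.
Set Implicit Arguments. Unset Strict Implicit. Unset Printing Implicit Defensive.
Import Order.TTheory GRing.Theory Num.Theory.
Local Open Scope ring_scope.
Local Open Scope classical_set_scope.

Lemma reindex_bij_pred (V : nmodType) (I K : finType) (P : pred I) (Q : pred K)
    (h : K -> I) (h' : I -> K) (F : I -> V) :
  (forall i, P i -> Q (h' i) /\ h (h' i) = i) ->
  (forall j, Q j -> P (h j) /\ h' (h j) = j) ->
  \sum_(i | P i) F i = \sum_(j | Q j) F (h j).
Proof.
move=> hK h'K; rewrite (reindex_onto h h'); last by move=> i /hK [].
apply: eq_bigl => j; apply/andP/idP => [[/hK [Qj _] /eqP <-] // | /h'K [Pj Ej]].
by split => //; apply/eqP.
Qed.

Section BoxSums.
Variable d : nat.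
Local Notation vec := ('I_d -> nat).

Lemma levecP (k l : vec) : reflect (forall i, (k i <= l i)%N) (levec k l).
Proof. exact: forallP. Qed.

Lemma levec_refl (k : vec) : levec k k.
Proof. exact/levecP. Qed.

Lemma levec_trans (k l m : vec) : levec k l -> levec l m -> levec k m.
Proof. by move=> /levecP kl /levecP lm; apply/levecP => i; apply: leq_trans (kl i) (lm i). Qed.

Lemma leq_normvec (k : vec) i : (k i <= normvec k)%N.
Proof. by rewrite /normvec (bigD1 i) //= leq_addr. Qed.

Lemma levec_bound (k l : vec) : levec l k -> forall i, (l i <= normvec k)%N.
Proof. by move=> /levecP lk i; apply: leq_trans (lk i) (leq_normvec k i). Qed.

Lemma normvec_levec (k l : vec) : levec l k -> (normvec l <= normvec k)%N.
Proof. by move=> /levecP lk; apply: leq_sum => i _. Qed.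

Lemma normvecB (k l : vec) : levec l k ->
  normvec (fun i => k i - l i)%N = (normvec k - normvec l)%N.
Proof. by move=> /levecP lk; rewrite /normvec sumnB. Qed.

Lemma normvec_eq0 (l : vec) : normvec l = 0%N -> l = @zerovec d.
Proof. by move=> l0; apply: funext => i; have := leq_normvec l i; rewrite l0 /zerovec; lia. Qed.

(* A point of the box [{l | l <= k}] is encoded by a finite function with
   values in ['I_N.+1], for any bound [N] on the coordinates of [k]. *)
Definition vec_of_ffun N (l : {ffun 'I_d -> 'I_N}) : vec := fun i => l i.

Definition ffun_of_vec N (l : vec) : {ffun 'I_d -> 'I_N.+1} := [ffun i => inord (l i)].

Lemma ffun_of_vecK N (l : vec) : (forall i, l i <= N)%N -> vec_of_ffun (ffun_of_vec N l) = l.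
Proof. by move=> lN; apply: funext => i; rewrite /vec_of_ffun ffunE inordK // ltnS. Qed.

Lemma vec_of_ffunK N (l : {ffun 'I_d -> 'I_N.+1}) : ffun_of_vec N (vec_of_ffun l) = l.
Proof. by apply/ffunP => i; rewrite ffunE inord_val. Qed.

Definition boxsum_in (V : nmodType) N (k : vec) (F : vec -> V) : V :=
  \sum_(l : {ffun 'I_d -> 'I_N.+1} | levec (vec_of_ffun l) k) F (vec_of_ffun l).

Definition boxsum (V : nmodType) (k : vec) (F : vec -> V) : V :=
  boxsum_in (normvec k) k F.

Lemma boxsumE (V : nmodType) N (k : vec) (F : vec -> V) :
  (forall i, k i <= N)%N -> boxsum k F = boxsum_in N k F.
Proof.
move=> kN; have lN l : levec l k -> forall i, (l i <= N)%N.
  by move=> /levecP lk i; apply: leq_trans (lk i) (kN i).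
rewrite /boxsum /boxsum_in
  (reindex_bij_pred (Q := fun l : {ffun 'I_d -> 'I_N.+1} => levec (vec_of_ffun l) k)
     (h := fun l => ffun_of_vec _ (vec_of_ffun l)) (h' := fun l => ffun_of_vec N (vec_of_ffun l))).
- by apply: eq_bigr => l lk; rewrite ffun_of_vecK //; apply: levec_bound.
- by move=> l lk /=; rewrite ffun_of_vecK ?vec_of_ffunK //; apply: lN.
- by move=> l lk /=; rewrite ffun_of_vecK ?vec_of_ffunK //; apply: levec_bound.
Qed.

Lemma eq_boxsum (V : nmodType) (k : vec) (F G : vec -> V) :
  (forall l, levec l k -> F l = G l) -> boxsum k F = boxsum k G.
Proof. by move=> FG; apply: eq_bigr => l /FG. Qed.

Lemma boxsumB (V : zmodType) (k : vec) (F G : vec -> V) :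
  boxsum k (fun l => F l - G l) = boxsum k F - boxsum k G.
Proof. exact: sumrB. Qed.

Lemma boxsum_single (V : nmodType) (k l0 : vec) (F : vec -> V) :
  levec l0 k -> (forall l, levec l k -> l <> l0 -> F l = 0) -> boxsum k F = F l0.
Proof.
move=> l0k F0; have l0N := levec_bound l0k.
rewrite /boxsum /boxsum_in (bigD1 (ffun_of_vec _ l0)) /= ffun_of_vecK //.
rewrite big1 ?addr0 // => l /andP [lk ne]; apply: F0 => // E.
by move: ne; rewrite -E vec_of_ffunK eqxx.
Qed.

Lemma boxsum_reflect (V : nmodType) (k : vec) (F : vec -> V) :
  boxsum k F = boxsum k (fun l => F (fun i => k i - l i)%N).
Proof.
have kl l : levec (fun i => k i - l i)%N k by apply/levecP => i; apply: leq_subr.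
have klK l : levec l k -> (fun i => k i - (k i - l i))%N = l.
  by move=> /levecP lk; apply: funext => i; rewrite subKn.
set N := normvec k.
rewrite /boxsum /boxsum_in
  (reindex_bij_pred (Q := fun l : {ffun 'I_d -> 'I_N.+1} => levec (vec_of_ffun l) k)
   (h := fun l => ffun_of_vec _ (fun i => k i - vec_of_ffun l i)%N)
   (h' := fun l => ffun_of_vec _ (fun i => k i - vec_of_ffun l i)%N)).
- by apply: eq_bigr => l lk; rewrite ffun_of_vecK //; apply: levec_bound.
- by move=> l lk /=; rewrite ffun_of_vecK ?klK ?vec_of_ffunK //; apply: levec_bound.
- by move=> l lk /=; rewrite ffun_of_vecK ?klK ?vec_of_ffunK //; apply: levec_bound.
Qed.

(* Fubini for the simplex {(l, m) | l <= m <= k}, reparametrised by (l, m - l). *)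
Lemma boxsum_exchange (V : nmodType) (k : vec) (G : vec -> vec -> V) :
  boxsum k (fun m => boxsum m (fun l => G l (fun i => m i - l i)%N)) =
  boxsum k (fun l => boxsum (fun i => k i - l i)%N (G l)).
Proof.
set N := normvec k.
rewrite (eq_boxsum (G := fun m => boxsum_in N m (fun l => G l (fun i => m i - l i)%N))); last first.
  by move=> m mk; apply: boxsumE; apply: levec_bound.
rewrite [RHS](eq_boxsum (G := fun l => boxsum_in N (fun i => k i - l i)%N (G l))); last first.
  by move=> l _; apply: boxsumE => i; apply: leq_trans (leq_subr _ _) (leq_normvec k i).
rewrite /boxsum /boxsum_in (exchange_big_dep (fun l => levec (vec_of_ffun l) k)) /=; last first.
  by move=> m l mk lm; apply: levec_trans lm mk.
apply: eq_bigr => l /levecP lk.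
rewrite (reindex_bij_pred
   (Q := fun m : {ffun 'I_d -> 'I_N.+1} => levec (vec_of_ffun m) (fun i => k i - vec_of_ffun l i)%N)
   (h := fun m => ffun_of_vec N (fun i => vec_of_ffun l i + vec_of_ffun m i)%N)
   (h' := fun m => ffun_of_vec N (fun i => vec_of_ffun m i - vec_of_ffun l i)%N)).
- apply: eq_bigr => m /levecP mkl; rewrite ffun_of_vecK => [|i].
    by congr G; apply: funext => i; rewrite addKn.
  by apply: leq_trans (leq_normvec k i); have := mkl i; have := lk i; lia.
- move=> m /andP [/levecP mk /levecP lm]; rewrite ffun_of_vecK => [|i]; last first.
    by apply: leq_trans (leq_subr _ _) (levec_bound (introT (levecP _ _) mk) i).
  split; first by apply/levecP => i; apply: leq_sub2r.
  by rewrite -[RHS]vec_of_ffunK; congr ffun_of_vec; apply: funext => i; rewrite subnKC.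
- move=> m /levecP mkl.
  have lmk i : (vec_of_ffun l i + vec_of_ffun m i <= k i)%N by have := mkl i; have := lk i; lia.
  rewrite ffun_of_vecK => [|i]; last by apply: leq_trans (lmk i) (leq_normvec k i).
  split; first by apply/andP; split; apply/levecP => i //; apply: leq_addr.
  by rewrite -[RHS]vec_of_ffunK; congr ffun_of_vec; apply: funext => i; rewrite addKn.
Qed.

End BoxSums.

Section Convolution.
Variables (R : realType) (s d : nat).
Local Notation ms := (mseq R s d).
Local Notation vec := ('I_d -> nat).
Local Notation "0_d" := (@zerovec d).
Local Notation munit := (@munit R s d).
Local Notation dg1 := (@dg1 R s d).

Lemma mconvE (A B : ms) k : mconv A B k = boxsum k (fun l => A l *m B (fun i => k i - l i)%N).
Proof. by []. Qed.

Lemma munit0 : munit 0_d = 1%:M.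
Proof. by rewrite /munit; case: forallP. Qed.

Lemma munitN0 (l : vec) : l <> 0_d -> munit l = 0.
Proof.
move=> l0; rewrite /munit; case: forallP => // /(_ _)/eqP l0'.
by case: l0; apply: funext.
Qed.

Lemma mconv1l (A : ms) k : mconv munit A k = A k.
Proof.
rewrite mconvE (boxsum_single (l0 := 0_d)) ?munit0 ?mul1mx; last 2 first.
- exact/levecP.
- by move=> l _ /munitN0 ->; rewrite mul0mx.
by congr A; apply: funext => i; apply: subn0.
Qed.

Lemma mconv1r (A : ms) k : mconv A munit k = A k.
Proof.
rewrite mconvE (boxsum_single (l0 := k)); last 2 first.
- exact: levec_refl.
- move=> l /levecP lk kl; rewrite munitN0 ?mulmx0 // => /(congr1 (fun f => f _)) lk0.
  by apply: kl; apply: funext => i; have := lk i; have := lk0 i; rewrite /zerovec; lia.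
have -> : (fun i => k i - k i)%N = 0_d by apply: funext => i; rewrite subnn.
by rewrite munit0 mulmx1.
Qed.

Lemma mconvA (A B C : ms) k : mconv (mconv A B) C k = mconv A (mconv B C) k.
Proof.
pose G l m := A l *m B m *m C (fun i => k i - l i - m i)%N.
rewrite mconvE; transitivity (boxsum k (fun m => boxsum m (fun l => G l (fun i => m i - l i)%N))).
  apply: eq_boxsum => m /levecP mk; rewrite mconvE mulmx_suml.
  apply: eq_bigr => l /levecP lm; congr (_ *m C _).
  by apply: funext => i; have := mk i; have := lm i; lia.
rewrite boxsum_exchange mconvE; apply: eq_boxsum => l _.
by rewrite mconvE mulmx_sumr; apply: eq_bigr => m _; rewrite mulmxA.
Qed.

Lemma mconvBr (A B C : ms) k :
  mconv A (fun l => B l - C l) k = mconv A B k - mconv A C k.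
Proof. by rewrite !mconvE -boxsumB; apply: eq_boxsum => l _; rewrite mulmxBr. Qed.

Lemma mconv_dg1l (A : ms) k : mconv dg1 A k = boxsum k A.
Proof. by rewrite mconvE [RHS]boxsum_reflect; apply: eq_boxsum => l _; rewrite mul1mx. Qed.

Lemma mconv_dg1r (A : ms) k : mconv A dg1 k = boxsum k A.
Proof. by rewrite mconvE; apply: eq_boxsum => l _; rewrite mulmx1. Qed.

Lemma mpowSr (q : ms) n k : mpow q n.+1 k = mconv (mpow q n) q k.
Proof.
elim: n k => [|n IH] k; first by rewrite /= mconv1r mconv1l.
have IH' : mpow q n.+1 = mconv (mpow q n) q by apply: funext.
change (mconv q (mpow q n.+1) k = mconv (mpow q n.+1) q k).
by rewrite {1}IH' -mconvA.
Qed.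

Section Kernel.
Variable q : ms.
Hypothesis q0 : q 0_d = 0.

Lemma mpow_vanish n (l : vec) : (normvec l < n)%N -> mpow q n l = 0.
Proof.
elim: n l => [//|n IH] l ln; rewrite /= mconvE /boxsum /boxsum_in big1 // => m ml.
have [/normvec_eq0 -> | m0] := eqVneq (normvec (vec_of_ffun m)) 0%N; first by rewrite q0 mul0mx.
by rewrite IH ?mulmx0 // normvecB //; have := normvec_levec ml; lia.
Qed.

Lemma mrkernel_uE (l : vec) M : (normvec l < M)%N ->
  mrkernel_u q l = \sum_(n < M) mpow q n l.
Proof.
move=> lM; apply/matrixP => i j; rewrite summxE mxE.
change (limn (fun N => \sum_(0 <= n < N) mpow q n l i j) = \sum_(n < M) mpow q n l i j).
apply: lim_near_cst => //; exists M => // N /= MN.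
rewrite big_mkord (big_ord_widen N (fun n => mpow q n l i j) MN) [RHS]big_mkcond /=.
apply: eq_bigr => n _; case: ifPn => // /negbTE nM.
by rewrite mpow_vanish ?mxE //; apply: leq_trans lM _; rewrite leqNgt nM.
Qed.

Lemma mrkernel_u_renewal k : mrkernel_u q k = munit k + mconv q (mrkernel_u q) k.
Proof.
set M := (normvec k).+1.
rewrite mconvE (eq_boxsum (G := fun l => \sum_(n < M) q l *m mpow q n (fun i => k i - l i)%N)).
  rewrite /boxsum /boxsum_in exchange_big /= (mrkernel_uE (M := M.+1)) //.
  by rewrite big_ord_recl.
move=> l lk; rewrite (mrkernel_uE (M := M)) ?mulmx_sumr // normvecB // ltnS.
exact: leq_subr.
Qed.

End Kernel.

Lemma renewal_of_dg1 (q u U : ms) :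
  (forall k, u k = munit k + mconv q u k) -> (forall k, U k = mconv dg1 u k) ->
  forall k, U k = dg1 k + mconv q U k.
Proof.
move=> uE UE k.
have -> : U = mconv dg1 u by apply: funext.
have qu : mconv q u = fun l => u l - munit l.
  by apply: funext => l; rewrite [u l in RHS]uE addrAC subrr add0r.
have dg1C : mconv q dg1 = mconv dg1 q.
  by apply: funext => l; rewrite mconv_dg1l mconv_dg1r.
by rewrite -mconvA dg1C mconvA qu mconvBr mconv1r addrC subrK.
Qed.

End Convolution.

Lemma measure_fin_partition (R : realType) (dT : measure_display) (T : measurableType dT)
    (mu : {measure set T -> \bar R}) (I : finType) (D : pred I) (F : I -> set T) :
  (forall x, D x -> measurable (F x)) -> trivIset [set x | D x] F ->
  mu (\bigcup_(x in [set x | D x]) F x) = (\sum_(x | D x) mu (F x))%E.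
Proof.
move=> mF tF; rewrite measure_fin_bigcup //; last exact: finite_finset.
by rewrite [RHS]bigfs ?index_enum_uniq // => x _; rewrite mem_index_enum.
Qed.

Section MarkovRenewalChain.
Variables (R : realType) (dT : measure_display) (T : measurableType dT) (s d : nat)
  (P : 'I_s -> probability T R) (J : nat -> T -> 'I_s) (S : nat -> T -> 'I_d -> nat)
  (q : mseq R s d).
Local Notation vec := ('I_d -> nat).
Local Notation "0_d" := (@zerovec d).

Hypothesis mJ : forall n j, measurable [set w | J n w = j].
Hypothesis mS : forall n l, measurable [set w | S n w = l].
Hypothesis S0 : forall w, S 0%N w = 0_d.
Hypothesis S_lt : forall n w, ltvec (S n w) (S n.+1 w).
Hypothesis PJ0 : forall i, P i [set w | J 0%N w = i] = 1%E.
Hypothesis Pnext : forall i n (jh : nat -> 'I_s) (sh : nat -> vec) j k,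
  P i (hist_event J S jh sh n `&` [set w | J n.+1 w = j /\ S n.+1 w = addvec (sh n) k])
  = ((q k (jh n) j)%:E * P i (hist_event J S jh sh n))%E.

Definition state_event n j (l : vec) := [set w | J n w = j /\ S n w = l].

Lemma measurable_state_event n j l : measurable (state_event n j l).
Proof. exact: measurableI (mJ n j) (mS n l). Qed.

Lemma measurable_hist_event jh sh n : measurable (hist_event J S jh sh n).
Proof.
apply: (@bigcap_measurableType _ _ (fun m => state_event m (jh m) (sh m)) [set m | m <= n]%N).
by move=> m _; apply: measurable_state_event.
Qed.

Lemma levec_S w m n : (m <= n)%N -> levec (S m w) (S n w).
Proof.
elim: n => [|n IH]; first by rewrite leqn0 => /eqP ->; apply: levec_refl.
rewrite leq_eqVlt => /predU1P [-> | /IH mn]; first exact: levec_refl.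
exact: levec_trans mn (S_lt n w).1.
Qed.

(* The Markov property conditions on the whole history; summing over the
   finitely many histories ending at [(j', l')] conditions on [(J_n, S_n)] only. *)
Section HistoryPartition.
Variables (n : nat) (j' : 'I_s) (l' : vec).
Let N := normvec l'.
Let history := {ffun 'I_n.+1 -> 'I_s * {ffun 'I_d -> 'I_N.+1}}.
Let jh (h : history) m := (h (inord m)).1.
Let sh (h : history) m := vec_of_ffun (h (inord m)).2.
Let ends_at (h : history) := h ord_max == (j', ffun_of_vec N l').

Lemma ends_atE h : ends_at h -> jh h n = j' /\ sh h n = l'.
Proof.
move=> /eqP hE; rewrite /jh /sh (_ : inord n = ord_max); last by apply: val_inj; rewrite /= inordK.
by rewrite hE /= ffun_of_vecK //; apply: leq_normvec.
Qed.

Lemma trivIset_hist :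
  trivIset [set h | ends_at h] (fun h => hist_event J S (jh h) (sh h) n).
Proof.
move=> h h' _ _ [w [hw h'w]]; apply/ffunP => t.
have [Jh Sh] := hw t (ltn_ord t); have [Jh' Sh'] := h'w t (ltn_ord t).
rewrite /jh /sh inord_val in Jh Sh Jh' Sh'.
rewrite [h t]surjective_pairing [h' t]surjective_pairing -Jh -Jh'.
by rewrite -[(h t).2]vec_of_ffunK -[(h' t).2]vec_of_ffunK -Sh -Sh'.
Qed.

Lemma state_event_hist : state_event n j' l' =
  \bigcup_(h in [set h | ends_at h]) hist_event J S (jh h) (sh h) n.
Proof.
apply/seteqP; split => w /=; last first.
  by move=> [h /ends_atE [<- <-] /(_ n (leqnn n))].
move=> [Jw Sw].
pose h : history := [ffun t : 'I_n.+1 => (J t w, ffun_of_vec N (S t w))].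
have hE m : (m <= n)%N -> jh h m = J m w /\ sh h m = S m w.
  move=> mn; rewrite /jh /sh /h ffunE /= inordK // ffun_of_vecK // => i.
  by apply: levec_bound; rewrite -Sw; apply: levec_S.
exists h; last by move=> m /hE [-> ->].
by rewrite /= /ends_at /h ffunE -Jw -Sw; apply/eqP.
Qed.

Lemma state_event_next i j k :
  P i (state_event n j' l' `&` [set w | J n.+1 w = j /\ S n.+1 w = addvec l' k]) =
  ((q k j' j)%:E * P i (state_event n j' l'))%E.
Proof.
have mhist h : measurable (hist_event J S (jh h) (sh h) n) by apply: measurable_hist_event.
rewrite state_event_hist setI_bigcupl !measure_fin_partition //; last first.
- exact: trivIset_setIr trivIset_hist.
- by move=> h _; apply: measurableI (mhist h) (measurable_state_event _ _ _).
- exact: trivIset_hist.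
rewrite ge0_sume_distrr; last by move=> h _; apply: measure_ge0.
apply: eq_bigr => h /ends_atE [jhE shE].
have -> : addvec l' k = addvec (sh h n) k by rewrite shE.
by rewrite /= Pnext jhE.
Qed.

End HistoryPartition.

Lemma state_event0_prob i j l : P i (state_event 0 j l) = (@munit R s d l i j)%:E.
Proof.
rewrite /munit; case: forallP => [l0 | l0]; last first.
  rewrite mxE (_ : state_event 0 j l = set0) ?measure0 //.
  by apply/seteqP; split => w //= [_ Sw]; apply: l0 => t; rewrite -Sw S0.
have -> : state_event 0 j l = [set w | J 0%N w = j].
  apply/seteqP; split => w /= => [[] // | Jw]; split => //.
  by rewrite S0; apply: funext => t; apply/esym/eqP/l0.
rewrite mxE; have [<- | ij] := eqVneq i j; first by rewrite PJ0.
apply/eqP; rewrite mulr0n eq_le measure_ge0 andbT.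
have <- : P i (~` [set w | J 0%N w = i]) = 0%:E by rewrite probability_setC // PJ0 subee.
apply: le_measure; rewrite ?inE; [exact: mJ | exact/measurableC/mJ |].
by move=> w /= Jw Jiw; move: ij; rewrite -Jw Jiw eqxx.
Qed.

(* S_1 > S_0 rules out a first jump of size 0. *)
Lemma kernel_at0 : q 0_d = 0.
Proof.
apply/matrixP => i j; rewrite mxE; apply: EFin_inj.
have := state_event_next 0 i 0_d i j 0_d.
rewrite state_event0_prob munit0 mxE eqxx mule1 => <-.
rewrite (_ : _ `&` _ = set0) ?measure0 //.
apply/seteqP; split => w //= [[_ S0w] [_ S1w]]; apply: (S_lt 0 w).2.
by rewrite S0w S1w.
Qed.

Lemma state_event_prob i n j l : P i (state_event n j l) = (mpow q n l i j)%:E.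
Proof.
elim: n j l => [|n IH] j l; first exact: state_event0_prob.
set N := normvec l.
pose D (p : 'I_s * {ffun 'I_d -> 'I_N.+1}) := levec (vec_of_ffun p.2) l.
pose F (p : 'I_s * {ffun 'I_d -> 'I_N.+1}) :=
  state_event n p.1 (vec_of_ffun p.2) `&` state_event n.+1 j l.
have -> : state_event n.+1 j l = \bigcup_(p in [set p | D p]) F p.
  apply/seteqP; split => [w [Jw Sw] | w [p _ [_ ?]] //].
  have Snl : levec (S n w) l by rewrite -Sw; exact: (S_lt n w).1.
  by exists (J n w, ffun_of_vec N (S n w)); rewrite /D /F /= ffun_of_vecK //; apply: levec_bound.
rewrite measure_fin_partition; last 2 first.
- by move=> p _; apply: measurableI; apply: measurable_state_event.
- move=> [j1 l1] [j2 l2] _ _ [w [[[/= <- E1] _] [[/= <- E2] _]]].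
  by rewrite -(vec_of_ffunK l1) -(vec_of_ffunK l2) -E1 -E2.
rewrite (eq_bigr (fun p => (q (fun t => l t - vec_of_ffun p.2 t)%N p.1 j *
                            mpow q n (vec_of_ffun p.2) i p.1)%:E)); last first.
  move=> [j' l'] /levecP l'l; rewrite /F /=.
  have -> : state_event n.+1 j l = [set w | J n.+1 w = j /\
      S n.+1 w = addvec (vec_of_ffun l') (fun t => l t - vec_of_ffun l' t)%N].
    by congr (state_event _ _ _); apply: funext => t; rewrite /addvec subnKC.
  by rewrite state_event_next IH.
rewrite sumEFin mpowSr mconvE /boxsum /boxsum_in summxE; congr EFin.
under [RHS]eq_bigr do rewrite mxE.
rewrite exchange_big pair_big_dep /=.
by apply: eq_big => [p | [j' l'] _] //=; rewrite mulrC.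
Qed.

Lemma visit_le_partition n j k :
  [set w | J n w = j /\ levec (S n w) k] =
  \bigcup_(l in [set l : {ffun 'I_d -> 'I_(normvec k).+1} | levec (vec_of_ffun l) k])
    state_event n j (vec_of_ffun l).
Proof.
apply/seteqP; split => w /= => [[Jw Snk] | [l lk [Jw Sw]]]; last by rewrite Sw.
exists (ffun_of_vec _ (S n w)); last by rewrite /state_event /= ffun_of_vecK //; apply: levec_bound.
by rewrite /= ffun_of_vecK //; apply: levec_bound.
Qed.

Lemma visit_le_prob i n j k : P i [set w | J n w = j /\ levec (S n w) k] =
  (boxsum k (fun l => mpow q n l i j))%:E.
Proof.
rewrite visit_le_partition measure_fin_partition; last 2 first.
- by move=> l _; apply: measurable_state_event.
- by move=> l l' _ _ [w [[_ Sl] [_ Sl']]]; rewrite -(vec_of_ffunK l) -(vec_of_ffunK l') -Sl -Sl'.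
by rewrite -sumEFin; apply: eq_bigr => l _; apply: state_event_prob.
Qed.

Lemma NcountP w k : (Ncount S k w <= normvec k)%N /\
  forall n, (n <= normvec k)%N -> levec (S n w) k = (n <= Ncount S k w)%N.
Proof.
pose A := [pred n : 'I_(normvec k).+1 | levec (S n w) k].
have A0 : (0 < #|A|)%N.
  by apply/card_gt0P; exists ord0; rewrite inE /= S0; apply/levecP.
have [n0 An0 n0E] := @eq_bigmax_cond _ A (fun n => nat_of_ord n) A0.
have -> : Ncount S k w = n0.
  by rewrite /Ncount -n0E; apply: eq_bigl => n; rewrite inE.
split; first by rewrite -ltnS.
move=> n nk; apply/idP/idP => [Snk | nn0].
- by rewrite -n0E (@leq_bigmax_cond _ A (fun m => nat_of_ord m)
    (@Ordinal (normvec k).+1 n nk)) // inE.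
- by apply: levec_trans (levec_S w nn0) _; move: An0; rewrite inE.
Qed.

Lemma Ntilde_visits w j k : Ntilde J S j k w =
  (\sum_(n < (normvec k).+1) ((J n w == j) && levec (S n w) k))%N.
Proof.
have [Nk Sk] := NcountP w k.
rewrite /Ntilde (big_ord_widen (normvec k).+1 (fun n => nat_of_bool (J n w == j))) // big_mkcond /=.
apply: eq_bigr => n _; rewrite ltnS -Sk; last by rewrite -ltnS.
by case: levec; case: (J n w == j).
Qed.

Lemma MRfunE_sum i j k :
  MRfunE P J S i j k = (\sum_(n < (normvec k).+1) boxsum k (fun l => mpow q n l i j))%:E.
Proof.
have mvisit n : measurable [set w | J n w = j /\ levec (S n w) k].
  rewrite visit_le_partition; apply: fin_bigcup_measurable => // l _.
  exact: measurable_state_event.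
rewrite /MRfunE (eq_integral (fun w => \sum_(n < (normvec k).+1)
    (\1_[set w | J n w = j /\ levec (S n w) k] w)%:E)); last first.
  move=> w _; rewrite Ntilde_visits natr_sum sumEFin; congr EFin; apply: eq_bigr => n _.
  rewrite indicE; congr (nat_of_bool _)%:R.
  by apply/andP/idP => [[/eqP Jw Sw] | /set_mem [-> ->]]; [apply: mem_set | rewrite eqxx].
rewrite ge0_integral_sum //; last first.
  by move=> n; apply/measurable_realfun.measurable_EFinP/measurable_realfun.measurable_indic.
rewrite -sumEFin; apply: eq_bigr => n _.
by rewrite integral_indic // setIT; apply: visit_le_prob.
Qed.

Lemma MRfun_boxsum k : MRfun P J S k = boxsum k (mrkernel_u q).
Proof.
apply/matrixP => i j; rewrite !mxE MRfunE_sum /= /boxsum /boxsum_in summxE exchange_big.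
apply: eq_bigr => l lk; rewrite (mrkernel_uE kernel_at0 (M := (normvec k).+1)) ?summxE //.
by rewrite ltnS normvec_levec.
Qed.

Lemma MRfun_dg1_conv k : MRfun P J S k = mconv (@dg1 R s d) (mrkernel_u q) k.
Proof. by rewrite mconv_dg1l MRfun_boxsum. Qed.

Lemma MRfun_renewal k : MRfun P J S k = @dg1 R s d k + mconv q (MRfun P J S) k.
Proof. exact: renewal_of_dg1 (mrkernel_u_renewal kernel_at0) MRfun_dg1_conv k. Qed.

End MarkovRenewalChain.

Theorem proposition9 (R : realType) (dT : measure_display) (T : measurableType dT)
  (s d : nat) (P : 'I_s -> probability T R)
  (J : nat -> T -> 'I_s) (S : nat -> T -> 'I_d -> nat) (q : mseq R s d) :
  (forall n j, measurable [set w | J n w = j]) ->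
  (forall n l, measurable [set w | S n w = l]) ->
  (forall w, S 0%N w = @zerovec d) ->
  (forall n w, ltvec (S n w) (S n.+1 w)) ->
  (forall i, P i [set w | J 0%N w = i] = 1%E) ->
  (forall i n (jh : nat -> 'I_s) (sh : nat -> 'I_d -> nat) j k,
      P i (hist_event J S jh sh n `&`
           [set w | J n.+1 w = j /\ S n.+1 w = addvec (sh n) k])
      = ((q k (jh n) j)%:E * P i (hist_event J S jh sh n))%E) ->
  (forall i j k, MRfunE P J S i j k \is a fin_num) /\
  (forall k, MRfun P J S k = @dg1 R s d k + mconv q (MRfun P J S) k) /\
  (forall k, MRfun P J S k = mconv (@dg1 R s d) (mrkernel_u q) k) /\
  (forall k, MRfun P J S k =
     \sum_(l : {ffun 'I_d -> 'I_(normvec k).+1} | levec (fun i => nat_of_ord (l i)) k)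
        mrkernel_u q (fun i => nat_of_ord (l i))).
Proof.
move=> mJ mS S0 S_lt PJ0 Pnext; split; [|split; [|split]].
- by move=> i j k; rewrite (MRfunE_sum mJ mS S0 S_lt PJ0 Pnext).
- exact: MRfun_renewal mJ mS S0 S_lt PJ0 Pnext.
- exact: MRfun_dg1_conv mJ mS S0 S_lt PJ0 Pnext.
- exact: MRfun_boxsum mJ mS S0 S_lt PJ0 Pnext.
Qed.
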